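(* In the algorithm DMA, the infeasible merged schedule produced in Step 3 has length at most $(\mu+1/\beta)\Delta$.
   Context: Model. $m$ servers, each a sender and a receiver. A coflow is an $m\times m$ nonnegative integer matrix $(d_{sr})$ of unit packets from sender $s$ to receiver $r$. Each job $j\in\mathcal{N}$ has $\mu_j$ coflows $\mathcal{D}^{(cj)}$ and a DAG $G_j$ (edge $c_1\to c_2$: $c_2$ may not start before $c_1$ finishes). Each slot, each sender sends at most one and each receiver receives at most one packet. $\mu=\max_j\mu_j$. Effective size of a coflow: $D=\max\{\max_s\sum_rd_{sr},\max_r\sum_sd_{sr}\}$; $\Delta$ is the effective size of $\sum_j\sum_c\mathcal{D}^{(cj)}$. BNA: polynomial-time procedure scheduling all packets of a coflow of effective size $D$ feasibly in $D$ consecutive slots. Algorithm DMA (constant $\beta>1/e$): Step 1: for each job, schedule its coflows one after another in a topological order of $G_j$, each with BNA, starting at time $0$ (isolated schedule). Step 2: delay each job's isolated schedule by an independent uniformly random integer in $[0,\Delta/\beta]$. Step 3: merge the delayed schedules slot by slot (capacity constraints may be violated). Step 4: replace each slot $t$ by $\alpha_t$ slots in which its packets are scheduled feasibly by BNA, where $\alpha_t\ge1$ is the maximum number of packets any server sends or receives in slot $t$. *)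

From HB Require Import structures.
From mathcomp Require Import all_boot all_order all_algebra.
From mathcomp Require Import reals sequences exp.
Set Implicit Arguments. Unset Strict Implicit. Unset Printing Implicit Defensive.
Import Order.TTheory GRing.Theory Num.Theory.

(* A coflow / a slot content on m servers: an m x m matrix of packet counts,
   entry (s, r) = packets from sender s to receiver r. *)
Notation coflow m := 'M[nat]_m.

Definition eff_size m (D : coflow m) : nat :=
  maxn (\max_(s < m) \sum_(r < m) D s r) (\max_(r < m) \sum_(s < m) D s r).

Definition schedule m := seq (coflow m).

Definition feasible_slot m (P : coflow m) : bool :=
  [forall s : 'I_m, \sum_(r < m) P s r <= 1] &&
  [forall r : 'I_m, \sum_(s < m) P s r <= 1].

Definition sched_total m (S : schedule m) : coflow m :=
  (\sum_(P <- S) P)%R.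

Definition is_BNA m (bna : coflow m -> schedule m) : Prop :=
  forall D : coflow m,
    [/\ size (bna D) = eff_size D,
        all (@feasible_slot m) (bna D) &
        sched_total (bna D) = D].

Definition topo_order (mu : nat) (G : rel nat) (ord : seq nat) : Prop :=
  [/\ perm_eq ord (iota 0 mu) &
      forall c1 c2, c1 < mu -> c2 < mu -> G c1 c2 -> index c1 ord < index c2 ord].

Definition isolated m (bna : coflow m -> schedule m)
  (coflows : nat -> coflow m) (ord : seq nat) : schedule m :=
  flatten [seq bna (coflows c) | c <- ord].

Definition delayed m (d : nat) (S : schedule m) : schedule m :=
  nseq d 0%R ++ S.

(* Step 3: merge the schedules slot by slot (capacity may be violated). *)
Definition merge_sched m (N : nat) (S : 'I_N -> schedule m) : schedule m :=
  mkseq (fun t => (\sum_(j < N) nth 0%R (S j) t)%R) (\max_(j < N) size (S j)).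

Definition total_demand m N (mu : 'I_N -> nat) (D : 'I_N -> nat -> coflow m)
  : coflow m := (\sum_(j < N) \sum_(c < mu j) D j c)%R.

From HB Require Import structures.
From mathcomp Require Import all_boot all_order all_algebra.
From mathcomp Require Import reals sequences exp.
Import Order.TTheory GRing.Theory Num.Theory.

(* Every coflow is dominated entrywise by the total demand, so its effective
   size is at most Delta; a job's isolated schedule therefore has length at
   most mu * Delta, its delayed version at most Delta / beta + mu * Delta,
   and the merged schedule is as long as the longest delayed schedule. *)

Lemma eff_size_addr {m} (A X : coflow m) : eff_size A <= eff_size (A + X)%R.
Proof.
rewrite /eff_size geq_max !leq_max; apply/andP; split; apply/orP.
- left; apply/bigmax_leqP => s _; apply: leq_trans (leq_bigmax s).
  by apply: leq_sum => r _; rewrite mxE leq_addr.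
- right; apply/bigmax_leqP => r _; apply: leq_trans (leq_bigmax r).
  by apply: leq_sum => s _; rewrite mxE leq_addr.
Qed.

Lemma eff_size_le_total_demand {m N} (mu : 'I_N -> nat)
    (D : 'I_N -> nat -> coflow m) j c :
  c < mu j -> eff_size (D j c) <= eff_size (total_demand mu D).
Proof.
move=> lt_c_mu; rewrite /total_demand (bigD1 j) //= (bigD1 (Ordinal lt_c_mu)) //=.
by rewrite -addrA eff_size_addr.
Qed.

Lemma size_isolated {m} {bna : coflow m -> schedule m} (D : nat -> coflow m)
    (ord : seq nat) :
  is_BNA bna -> size (isolated bna D ord) = \sum_(c <- ord) eff_size (D c).
Proof.
move=> bnaP; rewrite /isolated size_flatten /shape -map_comp sumnE big_map.
by apply: eq_bigr => c _ /=; have [] := bnaP (D c).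
Qed.

Lemma size_isolated_le {m} {bna : coflow m -> schedule m} {D : nat -> coflow m}
    {mu : nat} {G : rel nat} {ord : seq nat} (K : nat) :
  is_BNA bna -> topo_order mu G ord ->
  (forall c, c < mu -> eff_size (D c) <= K) ->
  size (isolated bna D ord) <= mu * K.
Proof.
move=> bnaP [ord_perm _] DK.
rewrite size_isolated // (perm_big _ ord_perm) -{1}(subn0 mu) big_mkord.
apply: (@leq_trans (\sum_(c < mu) K)); first by apply: leq_sum => c _; apply: DK.
by rewrite sum_nat_const card_ord.
Qed.

Lemma size_delayed {m} d (S : schedule m) : size (delayed d S) = d + size S.
Proof. by rewrite size_cat size_nseq. Qed.

Lemma size_merge_sched {m N} (S : 'I_N -> schedule m) :
  size (merge_sched S) = \max_(j < N) size (S j).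
Proof. exact: size_mkseq. Qed.

Lemma natr_bigmax_le {R : numDomainType} {I : finType} (F : I -> nat) (x : R) :
  (0 <= x)%R -> (forall i, (F i)%:R <= x)%R -> ((\max_i F i)%:R <= x)%R.
Proof. by move=> x_ge0 Fx; elim/big_ind: _ => // a b; case: leqP. Qed.

Theorem lemma3 (R : realType) (m N : nat) (mu : 'I_N -> nat)
  (D : 'I_N -> nat -> coflow m) (G : 'I_N -> rel nat)
  (ord : 'I_N -> seq nat) (bna : coflow m -> schedule m) (beta : R)
  (delay : 'I_N -> nat) :
  is_BNA bna ->
  (forall j, topo_order (mu j) (G j) (ord j)) ->
  ((expR 1)^-1 < beta)%R ->
  (forall j, ((delay j)%:R <= (eff_size (total_demand mu D))%:R / beta)%R) ->
  ((size (merge_sched (fun j => delayed (delay j) (isolated bna (D j) (ord j)))))%:R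
     <= ((\max_(j < N) mu j)%:R + beta^-1) * (eff_size (total_demand mu D))%:R)%R.
Proof.
move=> bnaP topo beta_gt delay_le.
have beta_gt0 : (0 < beta)%R by apply: lt_trans beta_gt; rewrite invr_gt0 expR_gt0.
set Delta := eff_size (total_demand mu D).
rewrite size_merge_sched; apply: natr_bigmax_le => [|j].
  by rewrite mulr_ge0 // addr_ge0 // ltW // invr_gt0.
rewrite size_delayed natrD addrC mulrDl.
apply: lerD; last by rewrite mulrC; apply: delay_le.
rewrite -natrM ler_nat; apply: leq_trans (size_isolated_le Delta bnaP (topo j) _) _.
  by move=> c; apply: eff_size_le_total_demand.
by rewrite leq_mul2r leq_bigmax orbT.
Qed.
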